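(* Let $P<P'$ be priority forests in $\Pi(n)$. Then the Möbius function satisfies $$\mu(P,P')=\begin{cases}(-1)^{\rho(P')-\rho(P)}&\text{if }P'\text{ is a }P\text{-Boolean forest},\\ 0&\text{otherwise.}\end{cases}$$
   Context: $[n]_0=\{0,\dots,n\}$. A priority forest on $[n]_0$ is a rooted forest with vertex set $[n]_0$ whose component trees $T_0,T_1,\dots$ are increasing (each non-root vertex has a larger label than its parent) and satisfy: for $j<k$ every label of $T_j$ is smaller than every label of $T_k$. The priority lattice $\Pi(n)$ is the set of priority forests on $[n]_0$ ordered by inclusion of edge sets, together with an extra top element $\hat1$. The rank of a priority forest is $\rho(P)=|E(P)|$. For priority forests $P<P'$, an edge $e\in E(P')\setminus E(P)$ is $P$-removable if deleting $e$ from $P'$ yields a priority forest (the forest's components are re-indexed by their root labels). $P'$ is a $P$-Boolean forest if every edge of $E(P')\setminus E(P)$ is $P$-removable. *)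

From mathcomp Require Import all_boot all_order all_algebra.
Set Implicit Arguments. Unset Strict Implicit. Unset Printing Implicit Defensive.
Import GRing.Theory.

(* Vertices [n]_0 = {0,...,n} are 'I_n.+1.  An edge of a rooted forest is
   recorded as the pair (parent, child). *)
Definition vtx (n : nat) := 'I_n.+1.
Definition edgeset (n : nat) := {set (vtx n * vtx n)}.

(* Rooted forest with increasing trees: every child has a larger label than
   its parent, and every vertex has at most one parent (roots = parentless
   vertices; acyclicity follows from the increasing labels). *)
Definition increasing_forest n (E : edgeset n) : bool :=
  [forall e in E, (e.1 < e.2)%N] &&
  [forall p : vtx n, forall p' : vtx n, forall c : vtx n,
     ((p, c) \in E) ==> ((p', c) \in E) ==> (p == p')].

Definition same_comp n (E : edgeset n) : rel (vtx n) :=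
  connect (fun u v => ((u, v) \in E) || ((v, u) \in E)).

(* Priority condition: the components can be listed T_0, T_1, ... so that
   every label of T_j is smaller than every label of T_k for j < k; i.e. for
   any two distinct components, if some label of the first is smaller than
   some label of the second, then all labels of the first are smaller than
   all labels of the second. *)
Definition priority_cond n (E : edgeset n) : bool :=
  [forall u : vtx n, forall v : vtx n, forall u' : vtx n, forall v' : vtx n,
     same_comp E u u' ==> same_comp E v v' ==> ~~ same_comp E u v ==>
     (u < v)%N ==> (u' < v')%N].

Definition is_priority_forest n (E : edgeset n) : bool :=
  increasing_forest E && priority_cond E.

Definition PF (n : nat) := {E : edgeset n | is_priority_forest E}.

(* The priority lattice Pi(n): priority forests plus an extra top element
   (None), ordered by inclusion of edge sets. *)
Definition Pi (n : nat) := option (PF n).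

Definition Pi_le n (x y : Pi n) : bool :=
  match x, y with
  | _, None => true
  | None, Some _ => false
  | Some a, Some b => val a \subset val b
  end.

(* Implemented by recursion with fuel; fuel #|T|.+1 exceeds the length of any
   chain, so this is the Möbius function whenever le is a partial order. *)
Local Open Scope ring_scope.
Fixpoint mobius_rec (T : finType) (le : rel T) (k : nat) (x y : T) : int :=
  match k with
  | 0 => 0
  | k'.+1 =>
      if x == y then 1
      else if le x y then
        - (\sum_(z : T | le x z && le z y && (z != y)) mobius_rec le k' x z)
      else 0
  end.

Definition mobius (T : finType) (le : rel T) (x y : T) : int :=
  mobius_rec le #|T|.+1 x y.

Local Close Scope ring_scope.
Definition rho n (P : PF n) : nat := #|val P|.

Definition removable n (P P' : PF n) (e : vtx n * vtx n) : bool :=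
  is_priority_forest (val P' :\ e).

Definition boolean_forest n (P P' : PF n) : bool :=
  [forall e in val P' :\: val P, removable P P' e].

From mathcomp Require Import all_boot all_order all_algebra.
Import GRing.Theory Num.Theory.
Set Implicit Arguments. Unset Strict Implicit. Unset Printing Implicit Defensive.

(* A priority forest is an increasing forest in which no edge passes over a
   root, i.e. every label strictly between a parent and its child has a
   parent: the trees are then intervals of labels, and the last root at or
   below a vertex identifies its tree.  For priority forests P < Q, let A be
   the set of edges of Q \ P passing over no root of P.  Adding to P any
   subset of A gives a priority forest, Q is P-Boolean iff Q \ P = A, and A is
   nonempty since it contains the new edge with the least child.  So the
   forests of [P, Q] all of whose new edges pass over no root of P are the
   P u S with S a subset of A, the claimed values of mu(P, -) sum over [P, Q]
   to an alternating sum over the subsets of A, which vanishes, and this is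
   the recursion defining the Moebius function. *)

Section MobiusUnique.
Local Open Scope ring_scope.

Variables (T : finType) (le : rel T).
Hypotheses (le_refl : reflexive le) (le_trans : transitive le)
  (le_anti : antisymmetric le).

Lemma card_down_lt z y : le z y -> z != y ->
  (#|[set w | le w z]| < #|[set w | le w y]|)%N.
Proof.
move=> zy zNy; apply: proper_card; apply/properP; split.
  by apply/subsetP => w; rewrite !inE => wz; apply: le_trans wz zy.
exists y; rewrite !inE ?le_refl //.
by apply: contra zNy => yz; apply/eqP/le_anti; rewrite zy yz.
Qed.

(* The fuel #|T|.+1 exceeds the size of every down-set, which strictly grows
   along the poset. *)
Lemma mobius_unique x y (f : T -> int) :
  f x = 1 ->
  (forall z, le x z -> le z y -> z != x ->
     f z = - \sum_(w | le x w && le w z && (w != z)) f w) ->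
  le x y -> mobius le x y = f y.
Proof.
move=> fx1 frec xy.
suff mobius_recE k z : le x z -> le z y -> (#|[set w | le w z]| < k)%N ->
    mobius_rec le k x z = f z.
  by apply: mobius_recE; rewrite // ltnS max_card.
elim: k z => // k IHk z xz zy zk /=.
have [<- // | xNz] := eqVneq x z.
have zNx : z != x by rewrite eq_sym.
rewrite xz (frec _ xz zy zNx); congr (- _); apply: eq_bigr => w /andP[/andP[xw wz] wNz].
apply: IHk => //; first exact: le_trans wz zy.
exact: leq_trans (card_down_lt wz wNz) (ltnSE zk).
Qed.

End MobiusUnique.

Section PowersetSign.
Local Open Scope ring_scope.

Lemma sum_powerset_sign (T : finType) (A : {set T}) (a : T) : a \in A ->
  (\sum_(S in powerset A) (-1) ^+ #|S| : int) = 0.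
Proof.
move=> aA; pose toggle (S : {set T}) := if a \in S then S :\ a else a |: S.
have toggleK : involutive toggle.
  move=> S; rewrite [toggle S]/toggle; case: ifPn => aS; rewrite /toggle.
    by rewrite setD11 setD1K.
  by rewrite setU11 setU1K.
have toggle_sub S : (toggle S \subset A) = (S \subset A).
  rewrite /toggle; case: ifPn => aS; last by rewrite subUset sub1set aA.
  by rewrite -{2}(setD1K aS) subUset sub1set aA.
have sign_toggle S : (-1) ^+ #|toggle S| = - (-1) ^+ #|S| :> int.
  rewrite /toggle; case: ifPn => aS; last by rewrite cardsU1 aS exprS mulN1r.
  by rewrite -[in RHS](setD1K aS) cardsU1 setD11 exprS mulN1r opprK.
set s := \sum_(S in powerset A) _.
have s_opp : s = - s.
  rewrite {1}/s (reindex_inj (inv_inj toggleK)) -sumrN.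
  by apply: eq_big => S; rewrite ?powersetE ?toggle_sub // => _; rewrite sign_toggle.
by apply/eqP; rewrite -eqNr -s_opp.
Qed.

End PowersetSign.

Section Forests.
Variable n : nat.
Implicit Types (E F : edgeset n) (p c u v w r x y : vtx n).

Definition has_parent E w : bool := [exists p, (p, w) \in E].

Definition root_free_spans E : {set vtx n * vtx n} :=
  [set e : vtx n * vtx n | [forall w : vtx n, (e.1 < w < e.2)%N ==> has_parent E w]].

Lemma root_free_spansP E u v :
  reflect (forall w, u < w -> w < v -> has_parent E w) ((u, v) \in root_free_spans E).
Proof.
rewrite inE; apply: (iffP forallP) => [H w uw wv | H w].
  by apply: (implyP (H w)); rewrite uw wv.
by apply/implyP => /andP[]; apply: H.
Qed.

Lemma has_parentS E F w : E \subset F -> has_parent E w -> has_parent F w.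
Proof. by move=> /subsetP sEF /existsP[p pw]; apply/existsP; exists p; apply: sEF. Qed.

Lemma root_free_spansS E F : E \subset F -> root_free_spans E \subset root_free_spans F.
Proof.
move=> sEF; apply/subsetP => -[u v] /root_free_spansP uv.
by apply/root_free_spansP => w uw wv; apply: has_parentS sEF (uv w uw wv).
Qed.

Lemma increasing_forestP E :
  reflect ((forall p c, (p, c) \in E -> p < c) /\
           (forall p p' c, (p, c) \in E -> (p', c) \in E -> p = p'))
          (increasing_forest E).
Proof.
apply: (iffP andP) => [[/forall_inP lt_edge /forallP uniq_par] | [lt_edge uniq_par]].
  split=> [p c pc | p p' c pc p'c]; first exact: lt_edge pc.
  by apply/eqP; move: (uniq_par p) => /forallP/(_ p')/forallP/(_ c); rewrite pc p'c.
split; first by apply/forall_inP => -[p c] /lt_edge.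
apply/forallP => p; apply/forallP => p'; apply/forallP => c.
by apply/implyP => pc; apply/implyP => p'c; rewrite (uniq_par _ _ _ pc p'c).
Qed.

Lemma edge_lt E p c : increasing_forest E -> (p, c) \in E -> p < c.
Proof. by case/increasing_forestP => lt_edge _; apply: lt_edge. Qed.

Lemma parent_uniq E p p' c :
  increasing_forest E -> (p, c) \in E -> (p', c) \in E -> p = p'.
Proof. by case/increasing_forestP => _; apply. Qed.

Lemma increasing_forestS E F :
  F \subset E -> increasing_forest E -> increasing_forest F.
Proof.
move=> /subsetP sFE incE; apply/increasing_forestP; split=> [p c /sFE|p p' c /sFE pc /sFE].
  exact: edge_lt.
exact: parent_uniq.
Qed.

Lemma no_parent_ord0 E : increasing_forest E -> ~~ has_parent E ord0.
Proof. by move=> incE; apply/existsP => -[p /(edge_lt incE)]. Qed.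

Definition undirected E : rel (vtx n) := fun u v => ((u, v) \in E) || ((v, u) \in E).

Lemma same_comp_sym E : symmetric (same_comp E).
Proof. by apply: sym_connect_sym => u v; rewrite /undirected orbC. Qed.

Lemma same_comp_edge E p c : (p, c) \in E -> same_comp E p c.
Proof. by move=> pc; apply: connect1; rewrite /= pc. Qed.

Lemma connect_edges_le E u v :
  increasing_forest E -> connect (fun a b => (a, b) \in E) u v -> u <= v.
Proof.
move=> incE /connectP[s]; elim: s u => [u _ -> // | y s IHs u /= /andP[uy ys] vE].
exact: ltnW (leq_trans (edge_lt incE uy) (IHs y ys vE)).
Qed.

(* The descendants of a root form a union of components, because a vertex
   reached from the root has its unique parent reached too. *)
Lemma root_le_comp E r x :
  increasing_forest E -> ~~ has_parent E r -> same_comp E x r -> r <= x.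
Proof.
move=> incE r_root xr; pose desc := connect (fun a b => (a, b) \in E) r.
have desc_edge y z : (y, z) \in E -> desc y = desc z.
  move=> yz; apply/idP/idP => [ry | /connectP[s]].
    exact: connect_trans ry (connect1 yz).
  case/lastP: s => [_ /= zr | s z']; first by case/existsP: r_root; exists y; rewrite -zr.
  rewrite rcons_path last_rcons => /andP[rs lz] zz'; rewrite -zz' in lz.
  by rewrite -(parent_uniq incE lz yz); apply/connectP; exists s.
have desc_closed : closed (undirected E) desc.
  by move=> y z /orP[] /desc_edge.
have := closed_connect desc_closed xr; rewrite !inE /desc /= connect0.
exact: connect_edges_le.
Qed.

Lemma priority_condP E :
  reflect (forall u v u' v', same_comp E u u' -> same_comp E v v' ->
             ~~ same_comp E u v -> u < v -> u' < v')
          (priority_cond E).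
Proof.
apply: (iffP forallP) => [prio u v u' v' uu' vv' Nuv uv | prio u].
  by move: (prio u) => /forallP/(_ v)/forallP/(_ u')/forallP/(_ v'); rewrite uu' vv' Nuv uv.
apply/forallP => v; apply/forallP => u'; apply/forallP => v'.
by do 3!apply/implyP => ?; apply/implyP; apply: prio.
Qed.

Lemma priority_forest_root_free E :
  is_priority_forest E -> E \subset root_free_spans E.
Proof.
case/andP => incE /priority_condP prio; apply/subsetP => -[p c] pc.
apply/root_free_spansP => w pw wc; apply: contraT => w_root.
have pNw : ~~ same_comp E p w.
  by apply: contraL pw => /(root_le_comp incE w_root) wp; rewrite -leqNgt.
have := prio p w c w (same_comp_edge pc) (connect0 _ w) pNw pw.
by rewrite ltnNge (ltnW wc).
Qed.

Section LastRoot.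
Variable E : edgeset n.
Hypotheses (incE : increasing_forest E) (freeE : E \subset root_free_spans E).

Definition last_root x : nat := \max_(r : vtx n | (r <= x) && ~~ has_parent E r) r.

Lemma last_root_le x : last_root x <= x.
Proof. by apply/bigmax_leqP => r /andP[]. Qed.

Lemma le_last_root r x : ~~ has_parent E r -> r <= x -> r <= last_root x.
Proof.
move=> r_root rx.
by apply: (leq_bigmax_cond (F := fun r : vtx n => nat_of_ord r)); rewrite rx r_root.
Qed.

Lemma last_rootP x : exists2 r, ~~ has_parent E r & last_root x = r.
Proof.
have [|r /andP[_ r_root] xr] := eq_bigmax_cond (fun r : vtx n => nat_of_ord r)
  (A := fun r : vtx n => (r <= x) && ~~ has_parent E r).
  by apply/card_gt0P; exists ord0; rewrite unfold_in /= no_parent_ord0.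
by exists r.
Qed.

Lemma last_root_id r : ~~ has_parent E r -> last_root r = r.
Proof. by move=> r_root; apply/eqP; rewrite eqn_leq last_root_le le_last_root. Qed.

Lemma last_root_mono x y : x <= y -> last_root x <= last_root y.
Proof.
have [r r_root xr] := last_rootP x; rewrite xr => xy.
by apply: le_last_root r_root _; rewrite -xr (leq_trans (last_root_le x) xy).
Qed.

(* An edge cannot pass over a root, so parent and child see the same last root. *)
Lemma last_root_edge p c : (p, c) \in E -> last_root p = last_root c.
Proof.
move=> pc; apply/eqP; rewrite eqn_leq last_root_mono ?(ltnW (edge_lt incE pc)) //=.
have [r r_root cr] := last_rootP c; rewrite cr.
apply: (le_last_root r_root); rewrite leqNgt; apply/negP => pr.
have r_lt_c : r < c.
  have r_le_c : r <= c by rewrite -cr last_root_le.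
  rewrite ltn_neqAle r_le_c andbT.
  by apply: contraNneq r_root => /val_inj ->; apply/existsP; exists p.
by case/negP: r_root; move/root_free_spansP: (subsetP freeE _ pc); apply.
Qed.

Lemma same_comp_last_root x y : same_comp E x y = (last_root x == last_root y).
Proof.
have comp_root z r : ~~ has_parent E r -> last_root z = r -> same_comp E z r.
  move=> r_root; have [m] := ubnP z; elim: m z => // m IHm z zm zr.
  have [/existsP[q qz] | z_root] := boolP (has_parent E z); last first.
    have -> : z = r by apply/val_inj; rewrite /= -zr last_root_id.
    exact: connect0.
  have zq : same_comp E z q by rewrite same_comp_sym same_comp_edge.
  apply: connect_trans zq (IHm q _ _); first exact: leq_trans (edge_lt incE qz) zm.
  by rewrite (last_root_edge qz).
apply/idP/eqP => [xy | xy].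
  pose a := [pred z | last_root z == last_root x].
  have a_closed : closed (undirected E) a.
    by move=> u v /orP[] /last_root_edge uv; rewrite !inE uv.
  by have := closed_connect a_closed xy; rewrite !inE eqxx => /esym/eqP.
have [r r_root xr] := last_rootP x.
have yr : same_comp E y r by apply: (comp_root _ _ r_root); rewrite -xy.
rewrite same_comp_sym in yr.
exact: connect_trans (comp_root _ _ r_root xr) yr.
Qed.

Lemma root_free_priority_cond : priority_cond E.
Proof.
apply/priority_condP => u v u' v'; rewrite !same_comp_last_root.
move=> /eqP uu' /eqP vv' Nuv uv.
have lt_uv : last_root u < last_root v by rewrite ltn_neqAle Nuv (last_root_mono (ltnW uv)).
rewrite ltnNge; apply: contraTN lt_uv => v'u'.
by rewrite -leqNgt uu' vv' (last_root_mono v'u').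
Qed.

End LastRoot.

Lemma priority_forestE E :
  is_priority_forest E = increasing_forest E && (E \subset root_free_spans E).
Proof.
apply/idP/andP => [pfE | [incE freeE]].
  by split; [case/andP: pfE | apply: priority_forest_root_free].
by rewrite /is_priority_forest incE root_free_priority_cond.
Qed.

Lemma priority_forestU E S :
  is_priority_forest E -> increasing_forest (E :|: S) ->
  S \subset root_free_spans E -> is_priority_forest (E :|: S).
Proof.
rewrite !priority_forestE => /andP[_ freeE] incES freeS.
rewrite incES /= (subset_trans _ (root_free_spansS (subsetUl E S))) //.
by rewrite subUset freeE.
Qed.

Lemma proper_root_free_edge E F :
  F \subset root_free_spans F -> E \proper F ->
  exists e, e \in (F :\: E) :&: root_free_spans E.
Proof.
move=> freeF /properP[_ [e0 e0F e0E]].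
have new_child : exists m, [exists e in F :\: E, e.2 == m :> nat].
  by exists e0.2; apply/exists_inP; exists e0; rewrite ?inE ?e0F ?e0E.
case: (ex_minnP new_child) => _ /exists_inP[[u v] uvFE /eqP <-] min_v.
exists (u, v); rewrite inE uvFE /=; move: uvFE; rewrite inE => /andP[_ uvF].
apply/root_free_spansP => w uw wv.
have /root_free_spansP/(_ w uw wv)/existsP[q qwF] := subsetP freeF _ uvF.
apply/existsP; exists q; apply: contraT => qwNE.
suff : v <= w by rewrite leqNgt wv.
by apply: min_v; apply/exists_inP; exists (q, w); rewrite // inE qwNE qwF.
Qed.

Lemma pf_increasing (P : PF n) : increasing_forest (val P).
Proof. by case/andP: (valP P). Qed.

Lemma pf_root_free (P : PF n) : val P \subset root_free_spans (val P).
Proof. by have := valP P; rewrite priority_forestE => /andP[]. Qed.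

(* Deleting a new edge (q, w) makes w a root, and w is a root of P exactly
   when its edge (q, w) in Q is new. *)
Lemma boolean_forestE (P Q : PF n) : val P \subset val Q ->
  boolean_forest P Q = (val Q :\: val P \subset root_free_spans (val P)).
Proof.
move=> sPQ; have incQ := pf_increasing Q; have freeQ := pf_root_free Q.
apply/forall_inP/subsetP => [removable_new [u v] | new_free [u v] uvQP].
  rewrite inE => /andP[_ uvQ]; apply/root_free_spansP => w uw wv.
  have /root_free_spansP/(_ w uw wv)/existsP[q qwQ] := subsetP freeQ _ uvQ.
  apply/existsP; exists q; apply: contraT => qwNP.
  have : removable P Q (q, w) by apply: removable_new; rewrite inE qwNP.
  rewrite /removable priority_forestE => /andP[_ /subsetP freeQ'].
  have uvQ' : (u, v) \in val Q :\ (q, w).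
    by rewrite !inE uvQ andbT; apply: contraTneq wv => -[_ ->]; rewrite ltnn.
  case/root_free_spansP/(_ w uw wv)/existsP: (freeQ' _ uvQ') => q'.
  by rewrite !inE => /andP[+ q'wQ]; rewrite (parent_uniq incQ q'wQ qwQ) eqxx.
rewrite /removable priority_forestE (increasing_forestS (subsetDl _ _) incQ) /=.
apply/subsetP => -[p c] /setD1P[_ pcQ].
apply/root_free_spansP => w pw wc.
have /root_free_spansP/(_ w pw wc)/existsP[q qwQ] := subsetP freeQ _ pcQ.
have [qw_uv | qwNuv] := eqVneq (q, w) (u, v); last first.
  by apply/existsP; exists q; rewrite !inE qwNuv.
have pc_free : (p, c) \in root_free_spans (val P).
  have [/(subsetP (pf_root_free P)) // | pcNP] := boolP ((p, c) \in val P).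
  by apply: new_free; rewrite inE pcNP.
case/root_free_spansP/(_ w pw wc)/existsP: pc_free => q' q'wP.
move: uvQP; rewrite inE -qw_uv => /andP[/negP[]].
by rewrite -(parent_uniq incQ (subsetP sPQ _ q'wP) qwQ).
Qed.

End Forests.

Lemma Pi_le_refl n : reflexive (@Pi_le n).
Proof. by case=> //= P; apply: subxx. Qed.

Lemma Pi_le_trans n : transitive (@Pi_le n).
Proof. by move=> [y|] [x|] [z|] //=; apply: subset_trans. Qed.

Lemma Pi_le_anti n : antisymmetric (@Pi_le n).
Proof.
move=> [x|] [y|] //= /andP[xy yx]; congr Some.
by apply/val_inj/eqP; rewrite eqEsubset xy yx.
Qed.

Local Open Scope ring_scope.

Section BooleanMobius.
Variables (n : nat) (P : PF n).

Definition boolean_mobius (z : Pi n) : int :=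
  if z is Some Q then
    if val Q :\: val P \subset root_free_spans (val P)
    then (-1) ^+ #|val Q :\: val P| else 0
  else 0.

Definition extend (S : edgeset n) : PF n := insubd P (val P :|: S).

Lemma val_extend (Q : PF n) (S : edgeset n) : val P \subset val Q ->
  S \subset (val Q :\: val P) :&: root_free_spans (val P) ->
  val (extend S) = val P :|: S.
Proof.
move=> sPQ; rewrite subsetI => /andP[sSQP sSfree].
rewrite val_insubd priority_forestU ?(valP P) //.
apply: increasing_forestS (pf_increasing Q).
by rewrite subUset sPQ (subset_trans sSQP) ?subsetDl.
Qed.

Lemma sum_boolean_mobius (Q : PF n) : val P \proper val Q ->
  \sum_(z | Pi_le (Some P) z && Pi_le z (Some Q)) boolean_mobius z = 0.
Proof.
move=> ltPQ; have sPQ := proper_sub ltPQ.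
set A := (val Q :\: val P) :&: root_free_spans (val P).
have [a aA] := proper_root_free_edge (pf_root_free Q) ltPQ.
have new_extend (S : edgeset n) : S \subset A -> val (extend S) :\: val P = S.
  move=> sSA; rewrite (val_extend sPQ sSA) setDUl setDv set0U; apply/setDidPl.
  by move: sSA; rewrite subsetI subsetD => /andP[/andP[]].
pose h (S : edgeset n) : Pi n := Some (extend S).
rewrite (bigID (fun z => z \in h @: powerset A)) /= [X in _ + X]big1 ?addr0; last first.
  move=> [Z|] // /andP[/andP[/= sPZ sZQ] ZNh]; rewrite /boolean_mobius.
  case: ifPn => // newZ; case/imsetP: ZNh; exists (val Z :\: val P).
    by rewrite powersetE subsetI setSD.
  congr Some; apply/val_inj; rewrite (@val_extend Q) ?subsetI ?setSD //.
  by rewrite -{1}(setID (val Z) (val P)) (setIidPr sPZ).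
rewrite (eq_bigl (fun z => z \in h @: powerset A)); last first.
  move=> z; apply: andb_idl => /imsetP[S]; rewrite powersetE => sSA ->.
  rewrite /= (val_extend sPQ sSA) subsetUl subUset sPQ.
  by rewrite (subset_trans sSA) // (subset_trans (subsetIl _ _)) ?subsetDl.
rewrite big_imset /=; last first.
  move=> S1 S2; rewrite !powersetE => s1 s2 /Some_inj e.
  by rewrite -(new_extend _ s1) e new_extend.
rewrite -[RHS](sum_powerset_sign aA); apply: eq_bigr => S; rewrite powersetE => sSA.
by rewrite /boolean_mobius new_extend // (subset_trans sSA) ?subsetIr.
Qed.

Lemma boolean_mobius_rec (Q : PF n) : val P \proper val Q ->
  boolean_mobius (Some Q) =
  - \sum_(z | Pi_le (Some P) z && Pi_le z (Some Q) && (z != Some Q)) boolean_mobius z.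
Proof.
move=> ltPQ; have := sum_boolean_mobius ltPQ.
rewrite (bigD1 (Some Q)) /=; last by rewrite proper_sub ?subxx.
by move/eqP; rewrite addr_eq0 => /eqP.
Qed.

End BooleanMobius.

Theorem lemma5p11 (n : nat) (P P' : PF n) :
  val P \proper val P' ->
  mobius (@Pi_le n) (Some P) (Some P') =
    (if boolean_forest P P' then (-1) ^+ (rho P' - rho P)%N else 0).
Proof.
move=> ltPP'; have sPP' := proper_sub ltPP'.
rewrite (mobius_unique (@Pi_le_refl n) (@Pi_le_trans n) (@Pi_le_anti n)
           (f := boolean_mobius P)) //.
- by rewrite /boolean_mobius boolean_forestE // /rho cardsDS.
- by rewrite /boolean_mobius setDv sub0set cards0.
- move=> [Z|] //= sPZ _ ZNP; apply: boolean_mobius_rec.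
  by rewrite properEneq sPZ andbT; apply: contraNneq ZNP => /val_inj ->.
Qed.
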